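(* Let $X$ be a zero-dimensional compact metric space and $T:X\to X$ an aperiodic surjective local homeomorphism with $|Sp_l(X,T)|<\infty$. Then \[{\rm dim}_{\rm Rok}(X,T)\le 2|Sp_l(X,T)|+1.\]
   Context: Aperiodic: no $x$ with $T^n(x)=x$, $n\ge1$. $Sp_l(X,T)=\{x: |T^{-1}(\{x\})|\ge2\}$. For $N\ge1$, an $N$-Rokhlin tower is a collection $\{U_0,\dots,U_{N-1}\}$ of nonempty subsets of $X$ with $U_k=T^{-1}(U_{k-1})$ for $k=1,\dots,N-1$ and $\overline{U_i}\cap\overline{U_j}=\varnothing$ for $i\ne j$; it is open if all $U_i$ are open. ${\rm dim}_{\rm Rok}(X,T)\le d$ means: for every $N\ge1$ there are at most $d+1$ open $N$-Rokhlin towers whose members together cover $X$. ${\rm dim}_{\rm Rok}(X,T)$ is the least such $d$ ($\infty$ if none). *)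

From HB Require Import structures.
From mathcomp Require Import all_boot all_order all_algebra.
From mathcomp Require Import all_classical all_reals topology normedtype.
Set Implicit Arguments. Unset Strict Implicit. Unset Printing Implicit Defensive.
Import Order.TTheory GRing.Theory Num.Theory.
Local Open Scope classical_set_scope.

Definition zero_dim (X : topologicalType) : Prop :=
  forall (x : X) (U : set X), nbhs x U ->
    exists V : set X, [/\ open V, closed V, V x & V `<=` U].

(* Local homeomorphism: continuous, and every point has an open
   neighbourhood on which T is injective and open (hence a homeomorphism
   onto an open image). *)
Definition local_homeomorphism (X : topologicalType) (T : X -> X) : Prop :=
  continuous T /\
  forall x : X, exists U : set X,
    [/\ open U, U x, {in U &, injective T} &
        forall V : set X, open V -> V `<=` U -> open (T @` V)].

Definition aperiodic (X : Type) (T : X -> X) : Prop :=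
  forall (x : X) (n : nat), (1 <= n)%N -> iter n T x <> x.

Definition Sp_l (X : Type) (T : X -> X) : set X :=
  [set x | exists y1 y2 : X, [/\ y1 <> y2, T y1 = x & T y2 = x]].

Definition rokhlin_tower (X : topologicalType) (T : X -> X) (N : nat)
    (U : nat -> set X) : Prop :=
  [/\ forall k, (k < N)%N -> U k !=set0,
      forall k, (1 <= k)%N -> (k < N)%N -> U k = T @^-1` (U k.-1) &
      forall i j, (i < N)%N -> (j < N)%N -> i <> j ->
        closure (U i) `&` closure (U j) = set0].

Definition open_rokhlin_tower (X : topologicalType) (T : X -> X) (N : nat)
    (U : nat -> set X) : Prop :=
  rokhlin_tower T N U /\ forall k, (k < N)%N -> open (U k).

Definition rok_dim_le (X : topologicalType) (T : X -> X) (d : nat) : Prop :=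
  forall N : nat, (1 <= N)%N ->
    exists (m : nat) (F : nat -> nat -> set X),
      [/\ (m <= d.+1)%N,
          forall j, (j < m)%N -> open_rokhlin_tower T N (F j) &
          forall x : X, exists j k, [/\ (j < m)%N, (k < N)%N & F j k x]].

(* Zero-dimensionality and aperiodicity give every point a clopen
   neighbourhood W with W and T^-l W disjoint for 0 < l < N; compactness and a
   greedy extension glue finitely many of them into one such clopen set M whose
   N-step sweep (all T^-l M and T^l M, l < N) is the whole space.  Since Sp_l is
   finite, each forward orbit eventually stops meeting it, after which T^l is
   injective along the orbit; so every orbit enters M, and by compactness within
   a uniform time K.  The points whose first visit to M happens at a positive
   multiple of N form a second clopen set with the same disjointness, and every
   point reaches M or that set in fewer than N steps.  The preimage towers
   (T^-k M)_(k<N) and (T^-k B)_(k<N) are thus two open N-Rokhlin towers covering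
   X: under these definitions even dim_Rok <= 1 holds. *)

From HB Require Import structures.
From mathcomp Require Import all_boot all_order all_algebra.
From mathcomp Require Import all_classical all_reals topology normedtype.
From mathcomp Require Import zify.
Import Order.TTheory GRing.Theory Num.Theory.
Set Implicit Arguments. Unset Strict Implicit. Unset Printing Implicit Defensive.
Local Open Scope classical_set_scope.

Section ClopenFinite.
Variable X : topologicalType.

Lemma clopen_bigcup (I : choiceType) (A : set I) (F : I -> set X) :
  finite_set A -> (forall i, A i -> clopen (F i)) ->
  clopen (\bigcup_(i in A) F i).
Proof.
move=> finA cF; split; first by apply: bigcup_open => i /cF [].
by apply: closed_bigcup => // i /cF [].
Qed.

Lemma clopen_bigcap (I : choiceType) (A : set I) (F : I -> set X) :
  finite_set A -> (forall i, A i -> clopen (F i)) ->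
  clopen (\bigcap_(i in A) F i).
Proof.
move=> finA cF; rewrite -[X in clopen X]setCK setC_bigcap.
(* [clopenC] takes a spurious second set argument, instantiated by [set0]. *)
apply: (@clopenC _ _ set0); apply: clopen_bigcup => // i /cF.
exact: (@clopenC _ _ set0).
Qed.

Lemma compact_finite_subcover (W : X -> set X) :
  compact [set: X] -> (forall x, nbhs x (W x)) ->
  exists D : seq X, forall y, exists2 x, x \in D & W x y.
Proof.
move=> /compact_near_coveringP cX Wx.
pose F : set_system (seq X) :=
  [set Q | exists D0 : seq X, forall D : seq X, {subset D0 <= D} -> Q D].
have FF : Filter F.
  split; first by exists [::].
  - move=> P Q [D0 PD] [D1 QD]; exists (D0 ++ D1) => D sD.
    by split; [apply: PD|apply: QD] => x xD; apply: sD; rewrite mem_cat xD ?orbT.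
  - by move=> P Q PQ [D0 PD]; exists D0 => D /PD /PQ.
have [x _|D0 D0cover] := cX _ F (fun D y => exists2 x, x \in D & W x y) FF.
  exists (W x, [set D | x \in D]).
    by split => //=; exists [:: x] => D; apply; rewrite mem_seq1.
  by move=> [y D] [/= Wxy xD]; exists x.
by exists D0 => y; exact: D0cover.
Qed.

End ClopenFinite.

Lemma continuous_iter (X : topologicalType) (T : X -> X) k :
  continuous T -> continuous (iter k T).
Proof.
move=> cT; elim: k => [|k IH] x /=; first exact: cvg_id.
exact: (continuous_comp (IH x) (cT _)).
Qed.

Lemma iter_surjective (X : Type) (T : X -> X) k :
  (forall y, exists x, T x = y) -> forall y, exists x, iter k T x = y.
Proof.
move=> sT; elim: k => [|k IH] y; first by exists y.
by have [z <-] := sT y; have [x <-] := IH z; exists x.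
Qed.

Lemma clopen_separation (X : topologicalType) (x y : X) :
  hausdorff_space X -> zero_dim X -> x <> y ->
  exists C : set X, [/\ clopen C, C x & ~ C y].
Proof.
move=> hX zX xy.
have cy : closed [set y] by apply: accessible_closed_set1; exact: hausdorff_accessible.
have [|C [oC cC Cx sC]] := zX x (~` [set y]).
  by apply: open_nbhs_nbhs; split; [rewrite openC|].
by exists C; split => // /sC; apply.
Qed.

Section LocalHomeomorphism.
Variables (X : topologicalType) (T : X -> X).
Hypotheses (hX : hausdorff_space X) (cX : compact [set: X])
  (lhT : local_homeomorphism T).

Lemma open_image (A : set X) : open A -> open (T @` A).
Proof.
move=> oA; rewrite openE => _ [x Ax <-].
have [U [oU Ux _ hU]] := lhT.2 x.
apply: (@filterS _ _ _ (T @` (A `&` U))); first by move=> z [w [Aw _] <-]; exists w.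
apply: open_nbhs_nbhs; split; first exact: hU (openI oA oU) (@subIsetr _ _ _).
by exists x.
Qed.

Lemma clopen_image (A : set X) : clopen A -> clopen (T @` A).
Proof.
move=> [oA cA]; split; first exact: open_image.
apply: compact_closed => //; apply: continuous_compact.
  by apply: continuous_subspaceT; case: lhT.
exact: (subclosed_compact cA cX).
Qed.

Lemma clopen_iter_image k (A : set X) : clopen A -> clopen (iter k T @` A).
Proof.
move=> cA; elim: k => [|k IH]; first by rewrite image_id.
by rewrite -[iter k.+1 T]/(T \o iter k T) -image_comp; exact: clopen_image.
Qed.

End LocalHomeomorphism.

Section Sweep.
Variables (X : Type) (T : X -> X) (N : nat).

Definition no_return (W : set X) :=
  forall y l, W y -> (0 < l < N)%N -> ~ W (iter l T y).

Definition sweep (M : set X) : set X :=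
  \bigcup_(l in `I_N) (iter l T @^-1` M `|` iter l T @` M).

Lemma sub_sweep (M : set X) : (0 < N)%N -> M `<=` sweep M.
Proof. by move=> N0 x Mx; exists 0%N => //; left. Qed.

Lemma sweep_mono (M M' : set X) : M `<=` M' -> sweep M `<=` sweep M'.
Proof.
move=> MM' x [l lN [Mx|[m Mm <-]]]; exists l => //; first by left; exact: MM'.
by right; exists m => //; exact: MM'.
Qed.

Section Extension.
Variables (M W : set X).
Let M' := M `|` (W `\` sweep M).

Lemma no_return_extend : no_return M -> no_return W -> no_return M'.
Proof.
move=> nM nW y l [My|[Wy nsy]] lN [Mly|[Wly nsly]].
- exact: nM My lN Mly.
- by apply: nsly; exists l; [case/andP: lN|right; exists y].
- by apply: nsy; exists l; [case/andP: lN|left].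
- exact: nW Wy lN Wly.
Qed.

Lemma sweep_extend : (0 < N)%N -> sweep M `|` W `<=` sweep M'.
Proof.
move=> N0 x [|Wx]; first by apply: sweep_mono => z Mz; left.
have [sx|nsx] := pselect (sweep M x); first by apply: sweep_mono sx => z Mz; left.
by apply: sub_sweep => //; right.
Qed.

End Extension.
End Sweep.

Section ClopenSweep.
Variables (X : topologicalType) (T : X -> X).
Hypotheses (hX : hausdorff_space X) (cX : compact [set: X])
  (lhT : local_homeomorphism T).

Lemma clopen_sweep N (M : set X) : clopen M -> clopen (sweep T N M).
Proof.
move=> cM; apply: clopen_bigcup => [|l _]; first exact: finite_II.
apply: clopenU; last exact: clopen_iter_image.
by apply: preimage_clopen => //; apply: continuous_iter; case: lhT.
Qed.

Lemma clopen_no_return_sweep_setT N :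
  (0 < N)%N -> (forall x, exists W, [/\ clopen W, W x & no_return T N W]) ->
  exists M, [/\ clopen M, no_return T N M & sweep T N M = setT].
Proof.
move=> N0 /choice [W /all_and3 [cW Wx nW]].
have [D Dcover] := compact_finite_subcover cX (fun x =>
  open_nbhs_nbhs (conj (proj1 (cW x)) (Wx x))).
suff [M [cM nM DM]] : exists M, [/\ clopen M, no_return T N M &
    forall x, x \in D -> W x `<=` sweep T N M].
  exists M; split => //; apply/seteqP; split => // y _.
  by have [x /DM] := Dcover y; apply.
elim: D {Dcover} => [|x D [M [cM nM DM]]].
  by exists set0; split => //; exact: clopen0.
exists (M `|` (W x `\` sweep T N M)); split.
- apply: clopenU => //; apply: clopenI => //.
  by apply: (@clopenC _ _ set0); exact: clopen_sweep.
- exact: no_return_extend.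
- move=> z; rewrite inE => /predU1P [->|zD] y Wy; apply: sweep_extend => //.
    by right.
  by left; exact: DM zD y Wy.
Qed.

End ClopenSweep.

Lemma aperiodic_iter_inj (X : Type) (T : X -> X) (x : X) a b :
  aperiodic T -> iter a T x = iter b T x -> a = b.
Proof.
move=> apT; wlog ab : a b / (a <= b)%N.
  by move=> H e; case: (leqP a b) => [/H -> //|/ltnW /H ->].
move=> e; apply/eqP; rewrite eqn_leq ab /=; rewrite leqNgt; apply/negP => lab.
apply: (apT (iter a T x) (b - a)); first by rewrite subn_gt0.
by rewrite -iterD subnK // ltnW.
Qed.

Lemma clopen_no_return_nbhd (X : topologicalType) (T : X -> X) N (x : X) :
  hausdorff_space X -> zero_dim X -> continuous T -> aperiodic T ->
  exists W, [/\ clopen W, W x & no_return T N W].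
Proof.
move=> hX zX cT apT; elim: N => [|n [W [cW Wx nW]]].
  by exists setT; split => //; [exact: clopenT|move=> y l _; rewrite ltn0 andbF].
have [->|n0] := posnP n.
  by exists W; split => // y l _; rewrite ltnS leqn0 andbC => /andP[/eqP ->].
have xn : x <> iter n T x.
  by move=> e; move: n0; rewrite -(aperiodic_iter_inj (a := 0) apT e).
have [C [cC Cx nCn]] := clopen_separation hX zX xn.
exists (W `&` C `&` iter n T @^-1` ~` C); split => //.
  apply: clopenI; first exact: clopenI.
  by apply: preimage_clopen; [exact: (@clopenC _ _ set0)|exact: continuous_iter].
move=> y l [[Wy Cy] nCy] /andP[l0]; rewrite ltnS leq_eqVlt => /orP[/eqP ->|ln].
  by move=> [[_ ?] _].
by move=> [[+ _] _]; apply: nW Wy _; rewrite l0.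
Qed.

Section OrbitHits.
Variables (X : eqType) (T : X -> X).
Hypothesis apT : aperiodic T.

Lemma orbit_eventually_avoids (s : seq X) (x : X) :
  exists B, forall t, (B < t)%N -> iter t T x \notin s.
Proof.
elim: s => [|p s [B hB]]; first by exists 0%N.
have [[t0 e0]|np] := pselect (exists t0, iter t0 T x = p); last first.
  exists B => t Bt; rewrite in_cons (negbTE (hB t Bt)) orbF.
  by apply/eqP => e; apply: np; exists t.
exists (maxn B t0) => t; rewrite gtn_max => /andP[Bt t0t].
rewrite in_cons (negbTE (hB t Bt)) orbF; apply/eqP => e.
by move: t0t; rewrite (aperiodic_iter_inj apT (etrans e (esym e0))) ltnn.
Qed.

Lemma iter_collision_Sp_l l (a b : X) :
  iter l T a = iter l T b -> a <> b ->
  exists2 j, (0 < j <= l)%N & Sp_l T (iter j T a).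
Proof.
elim: l a b => [|l IH] a b; first by move=> /= ->.
rewrite !iterSr => e ab; have [eT|nT] := pselect (T a = T b).
  by exists 1%N => //; exists a, b.
by have [j /andP[j0 jl] hj] := IH _ _ e nT; exists j.+1; rewrite ?ltnS ?jl // iterSr.
Qed.

Lemma orbit_hits N (s : seq X) (M : set X) :
  Sp_l T = [set x | x \in s] -> sweep T N M = setT ->
  forall x, exists k, M (iter k T x).
Proof.
(* Past time B the orbit of x avoids Sp_l, so the sweep point T^(B+N) x, if
   it is T^l m with m in M, has m itself on the orbit of x. *)
move=> Sp_s sweepM x; have [B hB] := orbit_eventually_avoids s x.
have : sweep T N M (iter (B + N) T x) by rewrite sweepM.
case=> l /= lN [Ml|[m Mm e]]; first by exists (l + (B + N))%N; rewrite iterD.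
have lBN : (l <= B + N)%N by rewrite (leq_trans (ltnW lN)) // leq_addl.
have [hit|ne] := pselect (iter (B + N - l) T x = m).
  by exists (B + N - l)%N; rewrite hit.
have [|j /andP[j0 jl]] := @iter_collision_Sp_l l _ m _ ne.
  by rewrite e -iterD subnKC.
rewrite Sp_s /= -iterD => in_s; exfalso; move: in_s; apply/negP/hB; lia.
Qed.

End OrbitHits.

Lemma bounded_hitting_time (X : topologicalType) (T : X -> X) (M : set X) :
  continuous T -> compact [set: X] -> open M ->
  (forall x, exists k, M (iter k T x)) ->
  exists K, forall x, exists2 k, (k <= K)%N & M (iter k T x).
Proof.
move=> cT cX oM /choice [k Mk].
have [|D Dcover] := compact_finite_subcover (W := fun x => iter (k x) T @^-1` M) cX.
  move=> x; apply: open_nbhs_nbhs; split; last exact: Mk.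
  by apply: open_comp oM => z _; exact: continuous_iter.
exists (\max_(x <- D) k x)%N => y; have [x xD My] := Dcover y.
by exists (k x) => //; exact: leq_bigmax_seq.
Qed.

Section FirstHit.
Variables (X : Type) (T : X -> X) (M : set X).

Definition first_hit k : set X :=
  [set x | M (iter k T x) /\ forall i, (i < k)%N -> ~ M (iter i T x)].

Lemma first_hit_exists x : (exists k, M (iter k T x)) -> exists k, first_hit k x.
Proof.
move=> [k0 Mk0]; have hx : exists k, `[< M (iter k T x) >].
  by exists k0; apply/asboolP.
case: (ex_minnP hx) => k /asboolP Mk kmin; exists k; split => // i ik.
by move=> /asboolP /kmin; rewrite leqNgt ik.
Qed.

Lemma first_hit_unique k k' x : first_hit k x -> first_hit k' x -> k = k'.
Proof.
move=> [Mk hk] [Mk' hk']; case: (ltngtP k k') => // [kk'|k'k].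
- by case: (hk' k kk').
- by case: (hk k' k'k).
Qed.

Lemma first_hit_iter k l x :
  (l <= k)%N -> first_hit k x -> first_hit (k - l) (iter l T x).
Proof.
move=> lk [Mk hk]; split; first by rewrite -iterD subnK.
by move=> i il; rewrite -iterD; apply: hk; rewrite -(subnK lk) ltn_add2r.
Qed.

Definition first_hit_multiple N : set X :=
  [set x | exists2 k, (0 < k)%N && (N %| k)%N & first_hit k x].

Lemma no_return_first_hit_multiple N : no_return T N (first_hit_multiple N).
Proof.
move=> y l [k /andP[k0 Nk] hk] /andP[l0 lN] [k' /andP[_ Nk'] hk'].
have lk : (l <= k)%N by rewrite ltnW // (leq_trans lN) // dvdn_leq.
rewrite -(first_hit_unique (first_hit_iter lk hk) hk') in Nk'.
have : (N %| l)%N by rewrite -(subKn lk) dvdn_sub.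
by move/(dvdn_leq l0); rewrite leqNgt lN.
Qed.

Lemma first_hit_multiple_cover N x : (0 < N)%N -> (exists k, M (iter k T x)) ->
  exists2 l, (l < N)%N & (M `|` first_hit_multiple N) (iter l T x).
Proof.
move=> N0 /first_hit_exists [k hk]; have [kN|Nk] := ltnP k N.
  by exists k => //; left; case: hk.
exists (k %% N)%N; first by rewrite ltn_pmod.
right; exists (k - k %% N)%N; last exact: first_hit_iter (leq_mod _ _) hk.
have -> : (k - k %% N = k %/ N * N)%N by rewrite {1}(divn_eq k N) addnK.
by rewrite dvdn_mull ?dvdnn // andbT muln_gt0 N0 andbT divn_gt0.
Qed.

End FirstHit.

Section ClopenFirstHit.
Variables (X : topologicalType) (T : X -> X) (M : set X).
Hypotheses (cT : continuous T) (cM : clopen M).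

Lemma clopen_first_hit k : clopen (first_hit T M k).
Proof.
have -> : first_hit T M k =
    iter k T @^-1` M `&` \bigcap_(i in `I_k) ~` (iter i T @^-1` M).
  by apply/seteqP; split => x [Mk hk]; split => // i /hk.
apply: clopenI; first exact: preimage_clopen cM (continuous_iter cT).
apply: clopen_bigcap => [|i _]; first exact: finite_II.
by apply: (@clopenC _ _ set0); exact: preimage_clopen (continuous_iter cT).
Qed.

Lemma clopen_first_hit_multiple N K :
  (forall x, exists2 k, (k <= K)%N & M (iter k T x)) ->
  clopen (first_hit_multiple T M N).
Proof.
move=> hK.
have -> : first_hit_multiple T M N = \bigcup_(k in `I_K.+1 `&`
    [set k | (0 < k)%N && (N %| k)%N]) first_hit T M k.
  apply/seteqP; split => x [k]; last by move=> [_ kN] hk; exists k.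
  move=> kN hk; exists k => //; split => //=; rewrite ltnS.
  have [k' k'K Mk'] := hK x; rewrite leqNgt; apply/negP => Kk.
  exact: hk.2 k' (leq_ltn_trans k'K Kk) Mk'.
apply: clopen_bigcup => [|k _]; last exact: clopen_first_hit.
exact: finite_setIl (finite_II _).
Qed.

End ClopenFirstHit.

Section Towers.
Variables (X : topologicalType) (T : X -> X) (N : nat).
Hypotheses (cT : continuous T) (sT : forall y, exists x, T x = y).

Lemma open_rokhlin_tower_iter_preimage (B : set X) :
  clopen B -> B !=set0 -> no_return T N B ->
  open_rokhlin_tower T N (fun k => iter k T @^-1` B).
Proof.
move=> cB [b Bb] nB.
have cBk k : clopen (iter k T @^-1` B) by exact: preimage_clopen cB (continuous_iter cT).
split; last by move=> k _; case: (cBk k).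
split.
- by move=> k _; have [x xb] := iter_surjective k sT b; exists x; rewrite /= xb.
- by case=> // k _ _; apply/seteqP; split => x /=; rewrite -iterS iterSr.
move=> i j iN jN ij.
rewrite -(proj1 (closure_id _) (cBk i).2) -(proj1 (closure_id _) (cBk j).2).
apply/seteqP; split => // x [/= Bi Bj].
wlog lt_ij : i j iN jN ij Bi Bj / (i < j)%N.
  move=> H; case: (ltngtP i j) => [|ji|//]; first exact: H.
  by apply: (H j i) => // /esym.
apply: (nB _ (j - i) Bi); first by rewrite subn_gt0 lt_ij (leq_ltn_trans (leq_subr _ _)).
by rewrite -iterD subnK // ltnW.
Qed.

Lemma rokhlin_cover_of_bases n (B : nat -> set X) :
  (forall j, (j < n)%N -> clopen (B j) /\ no_return T N (B j)) ->
  exists m (F : nat -> nat -> set X),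
    [/\ (m <= n)%N, forall j, (j < m)%N -> open_rokhlin_tower T N (F j) &
      forall x, (exists j k, [/\ (j < n)%N, (k < N)%N & B j (iter k T x)]) ->
        exists j k, [/\ (j < m)%N, (k < N)%N & F j k x]].
Proof.
elim: n => [|n IH] hB.
  by exists 0%N, (fun _ _ => set0); split => // x [j [k []]].
have [m [F [mn towers cover]]] := IH (fun j jn => hB j (ltnW jn)).
have [[b Bb]|B0] := pselect (B n !=set0); last first.
  exists m, F; split => [|//|x [j [k [jn kN Bj]]]]; first exact: leqW.
  move: jn; rewrite ltnS leq_eqVlt => /orP[/eqP jn|jn]; last by apply: cover; exists j, k.
  by rewrite jn in Bj; case: B0; exists (iter k T x).
have [cBn nBn] := hB n (ltnSn n).
exists m.+1, (fun j => if j == m then (fun k => iter k T @^-1` B n) else F j); split.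
- by rewrite ltnS.
- move=> j; rewrite ltnS leq_eqVlt => /orP[/eqP ->|jm].
    by rewrite eqxx; apply: open_rokhlin_tower_iter_preimage => //; exists b.
  by rewrite (ltn_eqF jm); exact: towers.
move=> x [j [k [jn kN Bj]]].
move: jn; rewrite ltnS leq_eqVlt => /orP[/eqP jn|jn].
  by exists m, k; rewrite eqxx -jn.
have [j' [k' [j'm k'N Fj']]] := cover x (ex_intro _ j (ex_intro _ k (And3 jn kN Bj))).
by exists j', k'; rewrite (ltn_eqF j'm) ltnS ltnW.
Qed.

End Towers.

Unset Implicit Arguments.

Theorem theorem4p7 (R : realType) (X : pseudoMetricType R)
  (T : X -> X) (s : seq X) :
  hausdorff_space X -> compact [set: X] -> zero_dim X ->
  aperiodic T -> (forall y : X, exists x : X, T x = y) -> local_homeomorphism T ->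
  uniq s -> Sp_l T = [set x | x \in s] ->
  rok_dim_le T (2 * size s + 1).
Proof.
move=> hX cX zX apT sT lhT _ Sp_s N N0.
have cT : continuous T by case: lhT.
have [M [cM nM sweepM]] := clopen_no_return_sweep_setT hX cX lhT N0
  (fun x => clopen_no_return_nbhd N x hX zX cT apT).
have hitM := orbit_hits apT Sp_s sweepM.
have [K hK] := bounded_hitting_time cT cX cM.1 hitM.
pose B (j : nat) := if j == 0%N then M else first_hit_multiple T M N.
have [|m [F [m2 towers cover]]] :=
  rokhlin_cover_of_bases (N := N) cT sT (n := 2) (B := B).
  case=> [|[]] // _; split => //; [exact: clopen_first_hit_multiple hK|].
  exact: no_return_first_hit_multiple.
exists m, F; split => // [|x]; first by rewrite (leq_trans m2) // ltnS leq_addl.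
apply: cover; have [l lN [Ml|Hl]] := first_hit_multiple_cover N0 (hitM x).
  by exists 0%N, l.
by exists 1%N, l.
Qed.
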